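(* Let $q \ge 5$ be a prime number, $s \in \mathbb Z_q^* \setminus \{1\}$ and $2 \le k \le q-1$. Let $\mathcal A = \{1,2,\dots,k-1\}$ and $\mathcal B = \{k,k+1,\dots,q-1\}$, regarded as sets of residue classes modulo $q$. Then neither $\mathcal A$ nor $\mathcal B$ is invariant under multiplication by $s$ (i.e. $s\mathcal A \neq \mathcal A$ and $s\mathcal B \neq \mathcal B$ in $\mathbb Z_q$). *)

From mathcomp Require Import all_boot all_algebra.
Set Implicit Arguments. Unset Strict Implicit. Unset Printing Implicit Defensive.
Import GRing.Theory.
Local Open Scope ring_scope.

Definition residues (q lo hi : nat) : {set 'F_q} :=
  [set x : 'F_q | x \in [seq (i%:R : 'F_q) | i <- iota lo (hi - lo)]].

Definition scale_set (q : nat) (s : 'F_q) (S : {set 'F_q}) : {set 'F_q} :=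
  [set s * x | x in S].

From mathcomp Require Import all_boot all_algebra.
From mathcomp Require Import zify.
Local Open Scope ring_scope.
Import GRing.Theory.

(* Multiplication by s != 0 permutes the nonzero residues, and A = {1..k-1},
   B = {k..q-1} partition them, so s fixes A iff it fixes B; moreover s fixes
   B iff it fixes -B = {1..q-k}.  Since (k-1) + (q-k) < q, one of A and -B is
   a segment {1..m} with 2m < q.  Such a segment is not fixed by s != 1: it
   would contain s, whose representative t satisfies 2 <= t <= m, and then
   j = m %/ t + 1 lies in {1..m} while m < t j <= 2m < q. *)

Section ScaleSet.
Context {q : nat}.

Lemma scale_set0U (s : 'F_q) (X : {set 'F_q}) :
  scale_set s (0 |: X) = 0 |: scale_set s X.
Proof. by rewrite /scale_set imsetU1 mulr0. Qed.

Lemma scale_setC (s : 'F_q) (X : {set 'F_q}) :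
  s != 0 -> scale_set s (~: X) = ~: scale_set s X.
Proof. by move=> s0; rewrite /scale_set !(can_imset_pre _ (mulKf s0)) preimsetC. Qed.

Lemma scale_set_comm (s t : 'F_q) (X : {set 'F_q}) :
  scale_set s (scale_set t X) = scale_set t (scale_set s X).
Proof. by rewrite /scale_set -!imset_comp; apply: eq_imset => x /=; rewrite mulrCA. Qed.

Lemma scale_set_fixed_compl (s : 'F_q) (X : {set 'F_q}) :
  s != 0 -> 0 \notin X ->
  (scale_set s X == X) = (scale_set s (~: (0 |: X)) == ~: (0 |: X)).
Proof.
move=> s0 X0; rewrite scale_setC // scale_set0U (can_eq setCK).
apply/eqP/eqP => [-> // | fixX0].
have sX0 : 0 \notin scale_set s X.
  by apply: contra X0 => /imsetP[x Xx /esym/eqP]; rewrite mulf_eq0 (negPf s0) => /eqP <-.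
by rewrite -(setU1K sX0) fixX0 setU1K.
Qed.

End ScaleSet.

Section PrimeField.
Context {q : nat} (q_prime : prime q).

Lemma ltn_Fp (x : 'F_q) : (x < q)%N.
Proof. by case: x => v; rewrite /= Fp_cast. Qed.

Lemma natr_Fp (x : 'F_q) : (x : nat)%:R = x.
Proof. by apply: ord_inj; rewrite val_Fp_nat // modn_small // ltn_Fp. Qed.

Lemma val_Fp_nat_small n : (n < q)%N -> (n%:R : 'F_q) = n :> nat.
Proof. by move=> ltnq; rewrite val_Fp_nat // modn_small. Qed.

Lemma val_Fp_eq0 (x : 'F_q) : ((x : nat) == 0%N) = (x == 0).
Proof. by apply/eqP/eqP => [x0 | -> //]; apply: ord_inj. Qed.

Lemma val_Fp_opp (x : 'F_q) : x != 0 -> (- x : 'F_q) = (q - x)%N :> nat.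
Proof.
rewrite -val_Fp_eq0 => x0; have xq := ltn_Fp x.
have -> : - x = (q - x)%N%:R.
  by rewrite natrB ?(ltnW xq) // pchar_Fp_0 // natr_Fp sub0r.
by rewrite val_Fp_nat_small; lia.
Qed.

Lemma mem_residues lo hi (x : 'F_q) :
  (hi <= q)%N -> (x \in residues q lo hi) = (lo <= x < hi)%N.
Proof.
move=> hiq; rewrite inE; apply/mapP/idP => [[i] | x_lohi].
  by rewrite mem_iota => i_lohi ->; rewrite val_Fp_nat_small; lia.
by exists (x : nat); rewrite ?natr_Fp // mem_iota; lia.
Qed.

Lemma residuesC k :
  (0 < k)%N -> (k <= q)%N -> ~: (0 |: residues q 1 k) = residues q k q.
Proof.
move=> k_gt0 k_le_q; apply/setP => x.
rewrite in_setC in_setU1 -(val_Fp_eq0 x) !mem_residues //.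
by move: (ltn_Fp x); lia.
Qed.

Lemma scale_set_opp_residues k :
  (0 < k)%N -> (k < q)%N ->
  scale_set (-1) (residues q k q) = residues q 1 (q - k).+1.
Proof.
move=> k_gt0 k_lt_q; have m1_neq0 : (-1 : 'F_q) != 0 by rewrite oppr_eq0 oner_eq0.
rewrite /scale_set (can_imset_pre _ (mulKf m1_neq0)); apply/setP => x.
rewrite inE invrN invr1 mulN1r !mem_residues //; last lia.
have [-> | x0] := eqVneq x 0; first by rewrite oppr0 /=; lia.
by rewrite val_Fp_opp //; move: (ltn_Fp x) x0; rewrite -val_Fp_eq0; lia.
Qed.

Lemma scale_stable_residues_eq1 (s : 'F_q) m :
  (0 < m)%N -> (2 * m < q)%N ->
  scale_set s (residues q 1 m.+1) \subset residues q 1 m.+1 -> s = 1.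
Proof.
move=> m_gt0 ltmq /subsetP stable.
have inS x : (x \in residues q 1 m.+1) = (1 <= x <= m)%N by rewrite mem_residues; lia.
have inS_scale x : x \in residues q 1 m.+1 -> s * x \in residues q 1 m.+1.
  by move=> Sx; apply/stable/imset_f.
have val1 : (1 : 'F_q) = 1%N :> nat by apply: (@val_Fp_nat_small 1); lia.
have := inS_scale 1; rewrite mulr1 !inS val1 => /(_ m_gt0) s_bnd.
apply: ord_inj; rewrite val1; apply/eqP; apply: contraT => s_neq1.
set t : nat := s in s_bnd s_neq1.
have t_gt1 : (1 < t)%N by lia.
pose j := (m %/ t).+1.
have j_le_m : (j <= m)%N by rewrite ltn_divLR; nia.
have m_lt_tj : (m < t * j <= 2 * m)%N.
  by have := divn_eq m t; have := ltn_pmod m (ltnW t_gt1); nia.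
have := inS_scale j%:R; rewrite !inS -[s]natr_Fp -natrM !val_Fp_nat_small; lia.
Qed.

End PrimeField.

Theorem lemma3 (q : nat) (s : 'F_q) (k : nat) :
  prime q -> (5 <= q)%N ->
  s != 0 -> s != 1 ->
  (2 <= k <= q.-1)%N ->
  scale_set s (residues q 1 k) != residues q 1 k /\
  scale_set s (residues q k q) != residues q k q.
Proof.
move=> q_prime _ s0 s1 k_bnd.
have [k_gt0 k_lt_q] : (0 < k)%N /\ (k < q)%N by lia.
set A := residues q 1 k; set B := residues q k q.
have A0 : 0 \notin A by rewrite mem_residues //; lia.
have fixAB : (scale_set s A == A) = (scale_set s B == B).
  by rewrite /B -(residuesC q_prime _ k_gt0 (ltnW k_lt_q)) scale_set_fixed_compl.
suff not_fixA : scale_set s A != A by rewrite -fixAB.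
have [small | large] := ltnP (2 * k.-1) q.
  have k1_gt0 : (0 < k.-1)%N by lia.
  apply: contra s1 => /eqP fixA; apply/eqP.
  apply: (scale_stable_residues_eq1 q_prime _ _ k1_gt0 small).
  by rewrite prednK // fixA.
have [qk_gt0 lt_qk_q] : (0 < q - k)%N /\ (2 * (q - k) < q)%N by lia.
rewrite fixAB; apply: contra s1 => /eqP fixB; apply/eqP.
apply: (scale_stable_residues_eq1 q_prime _ _ qk_gt0 lt_qk_q).
by rewrite -(scale_set_opp_residues q_prime _ k_gt0 k_lt_q) scale_set_comm fixB.
Qed.
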